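(* Consider a reaction network as below. If $P_{\kappa,c}$ is infinite for every $(\kappa,c)\in\mathbb{R}^r_{>0}\times\mathbb{R}^d$ with $P_{\kappa,c}\neq\emptyset$, then $P_{\kappa,c}=\emptyset$ for all $(\kappa,c)$ in a nonempty Zariski open subset of $\mathbb{R}^r_{>0}\times\mathbb{R}^d$.
   Context: A reaction network with species $X_1,\dots,X_n$ and reactions $\sum_j b_{ji}X_j\to\sum_j a_{ji}X_j$, $i=1,\dots,r$, with rate constants $\kappa\in\mathbb{R}^r_{>0}$, has stoichiometric matrix $\Gamma\in\mathbb{Z}^{n\times r}$ with entries $a_{ji}-b_{ji}$ and reactant matrix $B$ with entries $b_{ji}$. Let $s=\operatorname{rk}\Gamma$, $d=n-s$, $N\in\mathbb{Z}^{s\times r}$ of rank $s$ with $\operatorname{im}(N^\top)=\operatorname{im}(\Gamma^\top)$, $W\in\mathbb{R}^{d\times n}$ with rows a basis of $\ker(\Gamma^\top)$. With $\circ$ the Hadamard product and $(x^B)_i=\prod_j x_j^{b_{ji}}$, $P_{\kappa,c}=\{x\in\mathbb{R}^n_{>0}: N(\kappa\circ x^B)=0,\ Wx=c\}$. *)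

From HB Require Import structures.
From mathcomp Require Import all_boot all_order all_algebra.
From mathcomp Require Import reals.
From mathcomp Require Import mpoly.
Set Implicit Arguments. Unset Strict Implicit. Unset Printing Implicit Defensive.
Import Order.TTheory GRing.Theory Num.Theory.
Local Open Scope ring_scope.

(* Reaction network with n species and r reactions:
   reaction i is  sum_j B j i X_j -> sum_j A j i X_j. *)

Definition stoich (R : numDomainType) (n r : nat) (A B : 'M[nat]_(n, r)) : 'M[R]_(n, r) :=
  \matrix_(j, i) ((A j i)%:R - (B j i)%:R).

Definition monvec (R : numDomainType) (n r : nat) (B : 'M[nat]_(n, r))
  (x : 'cV[R]_n) : 'cV[R]_r :=
  \col_i \prod_(j < n) (x j 0) ^+ (B j i).

Definition hadamard (R : numDomainType) (m : nat) (u v : 'cV[R]_m) : 'cV[R]_m :=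
  \col_i (u i 0 * v i 0).

Definition positive_vec (R : numDomainType) (m : nat) (u : 'cV[R]_m) : Prop :=
  forall i, 0 < u i 0.

Definition Pkc (R : numDomainType) (n r s d : nat) (B : 'M[nat]_(n, r))
  (N : 'M[int]_(s, r)) (W : 'M[R]_(d, n)) (kappa : 'cV[R]_r) (c : 'cV[R]_d)
  (x : 'cV[R]_n) : Prop :=
  positive_vec x /\
  (map_mx (fun z : int => z%:~R) N) *m hadamard kappa (monvec B x) = 0 /\
  W *m x = c.

Definition finite_pred (T : eqType) (P : T -> Prop) : Prop :=
  exists s : seq T, forall x, P x -> x \in s.

Definition kc_point (R : pzRingType) (r d : nat) (kappa : 'cV[R]_r) (c : 'cV[R]_d)
  : 'I_(r + d) -> R := fun i => col_mx kappa c i 0.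

(* The relative Zariski open subset of R^r_{>0} x R^d given by the complement
   of the common zero set of the finite family ps of polynomials. *)
Definition zariski_open_at (R : realType) (r d : nat) (ps : seq {mpoly R[r + d]})
  (kappa : 'cV[R]_r) (c : 'cV[R]_d) : Prop :=
  positive_vec kappa /\ has (fun p => p.@[kc_point kappa c] != 0) ps.

From HB Require Import structures.
From mathcomp Require Import all_boot all_order all_algebra.
From mathcomp Require Import reals.
From mathcomp Require Import mpoly.
From mathcomp Require Import zify ring.
Import Order.TTheory GRing.Theory Num.Theory.
Local Open Scope ring_scope.
Set Implicit Arguments. Unset Strict Implicit. Unset Printing Implicit Defensive.

(* Every positive steady state x of (kappa, c) comes from a point (u, x) of
   R^(q + n), q = dim ker N, under the rational parametrization
   (u, x) |-> (kappa, c) = ((u Kb)_i / x^(B_i), W x), where the rows of Kb span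
   ker N.  As q + n <= r + d, the r + d coordinates of this map together with
   any coordinate x_j are r + d + 1 rational functions in at most r + d
   variables, hence algebraically dependent (a dimension count on polynomials
   of bounded degree).  The relation bounds the number of possible values of
   x_j once a nonzero polynomial does not vanish at (kappa, c), so outside a
   proper Zariski closed set every P_{kappa,c} is finite, hence empty by
   hypothesis.  Finally, a nonzero polynomial does not vanish on the whole
   positive orthant (Kronecker substitution), so the open set meets
   R^r_{>0} x R^d. *)

Lemma poly_roots_finite (R : idomainType) (p : {poly R}) : p != 0 ->
  exists s : seq R, forall t, root p t -> t \in s.
Proof.
have [k] := ubnP (size p); elim: k p => [//|k IH] p size_p p_neq0.
have [[t0 root_t0]|no_root] := boolp.pselect (exists t, root p t); last first.
  by exists [::] => t root_t; case: no_root; exists t.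
have [q def_p] := factor_theorem p t0 root_t0.
have q_neq0 : q != 0 by apply: contraNneq p_neq0 => q0; rewrite def_p q0 mul0r.
have size_q : (size q < k)%N.
  by move: size_p; rewrite def_p size_Mmonic ?monicXsubC // size_XsubC addn2.
have [s roots_q] := IH q size_q q_neq0.
exists (t0 :: s) => t; rewrite def_p rootM root_XsubC inE.
by case/orP=> [/roots_q ->|->]; rewrite ?orbT.
Qed.

Lemma digits_inj k S (a b : 'I_k -> nat) :
  (forall i, a i < S)%N -> (forall i, b i < S)%N ->
  (\sum_i a i * S ^ i)%N = (\sum_i b i * S ^ i)%N -> a =1 b.
Proof.
elim: k a b => [|k IH] a b a_lt b_lt; first by move=> _ [].
rewrite !big_ord_recl /= !expn0 !muln1.
have shift (c : 'I_k.+1 -> nat) : (\sum_(i < k) c (lift ord0 i) * S ^ bump 0 i)%N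
    = (S * \sum_(i < k) c (lift ord0 i) * S ^ i)%N.
  by rewrite big_distrr; apply: eq_bigr => i _; rewrite /bump add1n expnS mulnCA.
rewrite !shift => eq_sum.
have S_gt0 : (0 < S)%N by apply: leq_ltn_trans (a_lt ord0).
have eq0 : a ord0 = b ord0.
  have := congr1 (modn^~ S) eq_sum.
  by rewrite ![(_ + S * _)%N]addnC !(mulnC S) !modnMDl !modn_small.
move/eqP: eq_sum; rewrite eq0 eqn_add2l eqn_pmul2l // => /eqP eq_tail.
have eq_lift := IH _ _ (fun i => a_lt (lift ord0 i)) (fun i => b_lt (lift ord0 i)) eq_tail.
by move=> i; case: (unliftP ord0 i) => [j ->|->].
Qed.

Lemma mnm_lt_msize (R : nzRingType) k (p : {mpoly R[k]}) m i :
  m \in msupp p -> (m i < msize p)%N.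
Proof.
move=> /msize_mdeg_lt; apply: leq_ltn_trans.
by rewrite mdegE (bigD1 i) //= leq_addr.
Qed.

Section MultivariateEvaluation.
Variable R : realFieldType.

Lemma exists_positive_notin (s : seq R) : exists2 t, 0 < t & t \notin s.
Proof.
have le_sum x : x \in s -> x <= \sum_(y <- s) `|y|.
  elim: s => //= y s IH; rewrite inE big_cons => /orP[/eqP->|/IH le_x].
    by rewrite (le_trans (ler_norm y)) // lerDl sumr_ge0.
  by rewrite (le_trans le_x) // lerDr.
exists (1 + \sum_(y <- s) `|y|); first by rewrite ltr_wpDr ?sumr_ge0.
by apply/negP => /le_sum; rewrite gerDr leNgt ltr01.
Qed.

(* Kronecker substitution x_i := t ^ (S ^ i) turns p into a nonzero univariate
   polynomial, which has only finitely many roots. *)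
Lemma mpoly_nonzero_at_positive k (p : {mpoly R[k]}) : p != 0 ->
  exists2 v : 'I_k -> R, (forall i, 0 < v i) & p.@[v] != 0.
Proof.
move=> p_neq0; set S := msize p.
pose code (m : 'X_{1..k}) := (\sum_i m i * S ^ i)%N.
pose q := \sum_(m <- msupp p) p@_m *: 'X^(code m) : {poly R}.
have eval_subst t : p.@[fun i => t ^+ (S ^ i)] = q.[t].
  rewrite mevalE /q horner_sum; apply: eq_bigr => m _.
  rewrite hornerZ hornerXn -prodrXr; congr (_ * _).
  by apply: eq_bigr => i _; rewrite -exprM mulnC.
have [m0 m0_supp] : exists m0, m0 \in msupp p.
  case E: (msupp p) => [|m0 s]; last by exists m0; rewrite inE eqxx.
  by move: p_neq0; rewrite -msupp_eq0 E.
have code_inj m : m \in msupp p -> code m = code m0 -> m = m0.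
  move=> m_supp eq_code; apply/mnmP; apply: (digits_inj _ _ eq_code) => j;
    exact: mnm_lt_msize.
have q_neq0 : q != 0.
  apply/eqP => /(congr1 (fun z : {poly R} => z`_(code m0))).
  rewrite coef0 /q coef_sum (bigD1_seq m0) ?msupp_uniq //= coefZ coefXn eqxx mulr1.
  rewrite big1_seq ?addr0 => [eq0|m /andP[m_neq m_supp]].
    by move: m0_supp; rewrite mcoeff_msupp eq0 eqxx.
  rewrite coefZ coefXn; case: eqP => [/esym/(code_inj _ m_supp) eq_m|]; last by rewrite mulr0.
  by rewrite eq_m ?eqxx in m_neq.
have [s roots_q] := poly_roots_finite q_neq0.
have [t t_gt0 t_notin] := exists_positive_notin s.
exists (fun i => t ^+ (S ^ i)) => [i|]; first by rewrite exprn_gt0.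
by rewrite eval_subst; apply: contra t_notin => /eqP qt0; apply: roots_q; apply/eqP.
Qed.

End MultivariateEvaluation.

(* The counting inequality behind algebraic dependence: with
   D = ((k+1)(e+1))^k, the (D+1)^(k+1) monomials of degree at most D in each
   of k+1 functions outnumber the ((k+1) D e + 1)^q coefficients available to
   polynomials of total degree at most (k+1) D e in q <= k variables. *)
Lemma dependence_count_bound k q e D : (q <= k)%N -> D = ((k.+1 * e.+1) ^ k)%N ->
  ((k.+1 * D * e).+1 ^ q < D.+1 ^ k.+1)%N.
Proof.
move=> q_le_k def_D; set c := (k.+1 * e.+1)%N.
have D_gt0 : (0 < D)%N by rewrite def_D expn_gt0 muln_gt0.
have base_le : ((k.+1 * D * e).+1 <= c * D)%N by rewrite /c; nia.
apply: (@leq_ltn_trans ((k.+1 * D * e).+1 ^ k)); first exact: leq_pexp2l.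
have exp_mono m1 m2 j : (m1 <= m2)%N -> (m1 ^ j <= m2 ^ j)%N.
  by move=> le_m; elim: j => // j IH; rewrite !expnS leq_mul.
apply: (@leq_ltn_trans ((c * D) ^ k)); first exact: exp_mono.
by rewrite expnMn -def_D -expnS ltn_exp2r.
Qed.

Section AlgebraicDependence.
Variable F : fieldType.

(* Size bounds for products and powers of multivariate polynomials
   (msize p is the total degree of p plus one, or 0 for p = 0). *)
Lemma msizeM_le q (p1 p2 : {mpoly F[q]}) a b :
  (msize p1 <= a.+1)%N -> (msize p2 <= b.+1)%N -> (msize (p1 * p2) <= (a + b).+1)%N.
Proof.
have [->|p1_neq0] := eqVneq p1 0; first by rewrite mul0r msize0.
have [->|p2_neq0] := eqVneq p2 0; first by rewrite mulr0 msize0.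
rewrite msizeM //; case: (msize p1) (msize p2) => [|x] [|y] /=; lia.
Qed.

Lemma msizeX_le q (p : {mpoly F[q]}) e i :
  (msize p <= e.+1)%N -> (msize (p ^+ i) <= (i * e).+1)%N.
Proof.
move=> size_p; elim: i => [|i IH]; first by rewrite expr0 msize1.
by rewrite exprS mulSn; apply: msizeM_le.
Qed.

Lemma msize_prod_le q k (P : 'I_k -> {mpoly F[q]}) (a : 'I_k -> nat) :
  (forall i, msize (P i) <= (a i).+1)%N ->
  (msize (\prod_i P i) <= (\sum_i a i).+1)%N.
Proof.
move=> size_P; elim/big_ind2: _ => [|x1 x2 y1 y2|i _]; rewrite ?msize1 //.
exact: msizeM_le.
Qed.

(* Linear dependence by counting: more than S ^ q polynomials in q variables
   of size at most S live in a space of dimension S ^ q (one coordinate per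
   exponent below S in each variable), hence are linearly dependent. *)
Lemma mpoly_family_dependent q S (E : finType) (M : E -> {mpoly F[q]}) :
  (forall x, msize (M x) <= S)%N -> (S ^ q < #|E|)%N ->
  exists g : E -> F, (exists x, g x != 0) /\ \sum_x g x *: M x = 0.
Proof.
move=> size_M card_E.
pose Exps := {ffun 'I_q -> 'I_S}.
pose mono (f : Exps) : 'X_{1..q} := [multinom (f i : nat) | i < q].
pose L := \matrix_(i < #|E|, j < #|Exps|) (M (enum_val i))@_(mono (enum_val j)).
have card_Exps : #|Exps| = (S ^ q)%N by rewrite card_ffun !card_ord.
have /existsP[i0 /existsP[j0 nz]] : [exists i, exists j, kermx L i j != 0].
  apply: contraTT card_E => /existsPn ker0; rewrite -leqNgt -card_Exps.
  have /eqP : kermx L = 0.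
    apply/matrixP => i j; rewrite [RHS]mxE.
    by move/existsPn: (ker0 i) => /(_ j)/negPn/eqP.
  rewrite -mxrank_eq0 mxrank_ker subn_eq0 => /leq_trans; apply.
  exact: rank_leq_col.
pose g (x : E) := kermx L i0 (enum_rank x).
exists g; split; first by exists (enum_val j0); rewrite /g enum_valK.
have coef_comb f : \sum_x g x * (M x)@_(mono f) = 0.
  transitivity ((kermx L *m L) i0 (enum_rank f)); last by rewrite mulmx_ker mxE.
  rewrite mxE (reindex (@enum_rank E)) /=; last exact: onW_bij (@enum_rank_bij E).
  by apply: eq_bigr => x _; rewrite /g [L _ _]mxE !enum_rankK.
apply/mpolyP => m; rewrite mcoeff0 raddf_sum /=.
under eq_bigr do rewrite mcoeffZ.
have [/forallP m_small|/forallPn[i m_big]] := boolP [forall i, m i < S]%N.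
  pose f : Exps := [ffun i => Ordinal (m_small i)].
  by have -> : m = mono f by apply/mnmP => i; rewrite mnmE ffunE.
apply: big1 => x _; rewrite memN_msupp_eq0 ?mulr0 //.
apply: contra m_big => m_supp; exact: leq_trans (mnm_lt_msize _ _) (size_M x).
Qed.

(* Clearing the common denominator qv of a monomial in the quotients p i / qv
   and p0 / qv of total degree at most N. *)
Lemma homogenize_eval k N (qv p0 : F) (p : 'I_k -> F) (a : 'I_k -> nat) b :
  qv != 0 -> (\sum_i a i + b <= N)%N ->
  qv ^+ (N - (\sum_i a i + b)) * (\prod_i p i ^+ a i) * p0 ^+ b
  = qv ^+ N * ((\prod_i (p i / qv) ^+ a i) * (p0 / qv) ^+ b).
Proof.
move=> qv_neq0 deg_le; rewrite -{2}(subnK deg_le) !exprD exprMn exprVn.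
under [X in _ = _ * (X * _)]eq_bigr do rewrite exprMn exprVn.
by rewrite prodf_div prodrXr; field; rewrite !expf_neq0.
Qed.

Lemma rational_functions_dependent k q (P : 'I_k -> {mpoly F[q]}) (P0 Q : {mpoly F[q]}) :
  (q <= k)%N ->
  exists D : nat, exists g : {ffun 'I_k -> 'I_D.+1} * 'I_D.+1 -> F,
   (exists x, g x != 0) /\
   forall v : 'I_q -> F, Q.@[v] != 0 ->
     \sum_x g x * ((\prod_i ((P i).@[v] / Q.@[v]) ^+ x.1 i) * (P0.@[v] / Q.@[v]) ^+ x.2) = 0.
Proof.
move=> q_le_k; pose e := (\sum_i msize (P i) + msize P0 + msize Q)%N.
have size_P i : (msize (P i) <= e.+1)%N by rewrite /e (bigD1 i) //=; lia.
have size_P0 : (msize P0 <= e.+1)%N by rewrite /e; lia.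
have size_Q : (msize Q <= e.+1)%N by rewrite /e; lia.
pose D := ((k.+1 * e.+1) ^ k)%N; pose Ntot := (k.+1 * D)%N.
pose E : finType := ({ffun 'I_k -> 'I_D.+1} * 'I_D.+1)%type.
pose deg (x : E) := (\sum_i (x.1 i : nat) + x.2)%N.
have deg_le x : (deg x <= Ntot)%N.
  have : (\sum_i (x.1 i : nat) <= \sum_(i < k) D)%N.
    by apply: leq_sum => i _; rewrite -ltnS.
  rewrite sum_nat_const card_ord /deg /Ntot; have := ltn_ord x.2; lia.
pose M (x : E) := Q ^+ (Ntot - deg x) * (\prod_i P i ^+ x.1 i) * P0 ^+ x.2.
have size_M x : (msize (M x) <= (Ntot * e).+1)%N.
  have size_prod := msize_prod_le (fun i => msizeX_le (x.1 i) (size_P i)).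
  have := msizeM_le (msizeM_le (msizeX_le (Ntot - deg x) size_Q) size_prod)
    (msizeX_le x.2 size_P0).
  move/leq_trans; apply; rewrite ltnS -big_distrl -!mulnDl leq_mul2r.
  by rewrite -addnA (subnK (deg_le x)) leqnn orbT.
have card_E : ((Ntot * e).+1 ^ q < #|E|)%N.
  rewrite card_prod card_ffun !card_ord -expnSr.
  exact: (dependence_count_bound q_le_k).
have [g [g_nz dep]] := mpoly_family_dependent size_M card_E.
exists D, g; split => // v Q_v.
have := congr1 (meval v) dep; rewrite meval0 raddf_sum /=.
under eq_bigr => x _ do rewrite mevalZ /M !rmorphM /= !rmorphXn rmorph_prod /=.
under eq_bigr => x _ do under eq_bigr do rewrite rmorphXn.
under eq_bigr => x _ do rewrite (homogenize_eval _ _ Q_v (deg_le x)) mulrCA.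
by rewrite -mulr_sumr => /eqP; rewrite mulf_eq0 expf_eq0 (negbTE Q_v) andbF => /eqP.
Qed.

End AlgebraicDependence.

(* Writing
   the relation g as a polynomial in t with coefficients polynomial in y, the
   coefficient Lp of some power t ^ j with a nonzero term is a nonzero
   polynomial; wherever Lp(y) != 0 the relation is a nonzero polynomial in t,
   so only finitely many t satisfy it. *)
Lemma relation_roots_finite (F : idomainType) k D
    (g : {ffun 'I_k -> 'I_D.+1} * 'I_D.+1 -> F) :
  (exists x, g x != 0) ->
  exists Lp : {mpoly F[k]}, Lp != 0 /\
   forall y : 'I_k -> F, Lp.@[y] != 0 ->
    exists s : seq F, forall t,
      \sum_x g x * ((\prod_i (y i) ^+ x.1 i) * t ^+ x.2) = 0 -> t \in s.
Proof.
move=> [x0 g_x0].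
pose mono (a : {ffun 'I_k -> 'I_D.+1}) : 'X_{1..k} := [multinom (a i : nat) | i < k].
have mono_inj : injective mono.
  move=> a b /mnmP eq_ab; apply/ffunP => i; apply/val_inj.
  by have := eq_ab i; rewrite !mnmE.
pose C (j : 'I_D.+1) := \sum_a g (a, j) *: 'X_[mono a].
have C_eval y j : (C j).@[y] = \sum_a g (a, j) * \prod_i y i ^+ a i.
  rewrite /C raddf_sum /=; apply: eq_bigr => a _.
  by rewrite mevalZ mevalX; congr (_ * _); apply: eq_bigr => i _; rewrite mnmE.
exists (C x0.2); split.
  apply/eqP => /(congr1 (mcoeff (mono x0.1))); rewrite mcoeff0 /C raddf_sum /=.
  rewrite (bigD1 x0.1) //= big1 => [|a a_neq]; last first.
    by rewrite mcoeffZ mcoeffX (inj_eq mono_inj) (negbTE a_neq) mulr0.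
  rewrite mcoeffZ mcoeffX eqxx mulr1 addr0 -surjective_pairing.
  by apply/eqP.
move=> y C_y.
pose pt := \poly_(j < D.+1) (C (inord j)).@[y].
have pt_neq0 : pt != 0.
  apply: contraNneq C_y => /(congr1 (fun z : {poly F} => z`_x0.2)).
  by rewrite coef0 coef_poly ltn_ord inord_val => ->; rewrite eqxx.
have [s roots_pt] := poly_roots_finite pt_neq0.
exists s => t rel_t; apply: roots_pt; apply/eqP; rewrite -rel_t horner_poly.
under eq_bigr do rewrite inord_val C_eval mulr_suml.
rewrite exchange_big pair_big /=; apply: eq_bigr => [[a j]] _ /=.
by rewrite mulrA.
Qed.

Lemma finite_coordinate_values (R : nmodType) n (Ls : 'I_n -> seq R) :
  exists s : seq 'cV[R]_n, forall x : 'cV[R]_n, (forall j, x j 0 \in Ls j) -> x \in s.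
Proof.
pose K := (\sum_j size (Ls j))%N.
exists [seq \col_j nth 0 (Ls j) (f j) | f : {ffun 'I_n -> 'I_K.+1}] => x x_in.
have index_lt j : (index (x j 0%R) (Ls j) < K.+1)%N.
  by rewrite ltnS (leq_trans (index_size _ _)) // /K (bigD1 j) //= leq_addr.
apply/imageP; exists [ffun j => Ordinal (index_lt j)] => //.
by apply/matrixP => j o; rewrite !ord1 mxE ffunE nth_index.
Qed.

Lemma kc_point_col_split (R : pzRingType) r d (v : 'I_(r + d) -> R) :
  kc_point (\col_i v (lshift d i)) (\col_l v (rshift r l)) =1 v.
Proof.
move=> t; rewrite /kc_point -[t]splitK.
by case: (split t) => [i|l] /=; rewrite ?col_mxEu ?col_mxEd mxE.
Qed.

Section SteadyStateParametrization.
Variables (R : numFieldType) (n r s d : nat).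
Variables (B : 'M[nat]_(n, r)) (N : 'M[int]_(s, r)) (W : 'M[R]_(d, n)).

Local Notation NR := (map_mx (fun z : int => z%:~R) N : 'M[R]_(s, r)).

(* q = dim ker N; the rows of Kb form a basis of the row vectors h with
   N h^T = 0, i.e. of the possible values of the rate vector kappa o x^B. *)
Local Notation q := (\rank (kermx NR^T)).
Let Kb : 'M[R]_(q, r) := row_base (kermx NR^T).

Let bt := (\sum_j \sum_i B j i)%N.

Let bt_ge j i : (B j i <= bt)%N.
Proof. by rewrite /bt (bigD1 j) //= (bigD1 i) //= -addnA leq_addr. Qed.

(* Polynomials in q + n variables (u, x): the steady-state parametrization
   (u, x) |-> (kappa, c) with kappa_i = (u Kb)_i / x^(B_i) and c = W x,
   written as P t / Q with the common denominator Q = prod_j x_j ^ bt. *)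
Let Xu (l : 'I_q) : {mpoly R[q + n]} := 'X_(lshift n l).
Let Xx (j : 'I_n) : {mpoly R[q + n]} := 'X_(rshift q j).
Let Q := \prod_j Xx j ^+ bt.
Let Pk (i : 'I_r) := (\sum_l Kb l i *: Xu l) * \prod_j Xx j ^+ (bt - B j i).
Let Pc (l : 'I_d) := Q * \sum_j W l j *: Xx j.
Let P (t : 'I_(r + d)) := match split t with inl i => Pk i | inr l => Pc l end.

Let Q_eval v : Q.@[v] = \prod_j (Xx j).@[v] ^+ bt.
Proof. by rewrite rmorph_prod; apply: eq_bigr => j _; rewrite rmorphXn. Qed.

Let Q_eval_neq0 v : (forall j, (Xx j).@[v] != 0) -> Q.@[v] != 0.
Proof.
by move=> Xx_v; rewrite Q_eval prodf_seq_neq0; apply/allP => j _; rewrite expf_neq0.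
Qed.

Let Pk_eval v i : (forall j, (Xx j).@[v] != 0) ->
  (Pk i).@[v] / Q.@[v] = (\sum_l Kb l i * (Xu l).@[v]) / \prod_j (Xx j).@[v] ^+ B j i.
Proof.
move=> Xx_v; rewrite mevalM raddf_sum rmorph_prod Q_eval /=.
under eq_bigr do rewrite mevalZ.
under [\prod_j (_ ^+ (bt - _)).@[v]]eq_bigr do rewrite rmorphXn.
have split_bt : \prod_j (Xx j).@[v] ^+ bt =
    \prod_j (Xx j).@[v] ^+ (bt - B j i) * \prod_j (Xx j).@[v] ^+ B j i.
  by rewrite -big_split; apply: eq_bigr => j _; rewrite /= -exprD subnK ?bt_ge.
have prod_neq0 (e : 'I_n -> nat) : \prod_j (Xx j).@[v] ^+ e j != 0.
  by rewrite prodf_seq_neq0; apply/allP => j _; rewrite expf_neq0.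
rewrite split_bt; field; apply/andP; split; exact: prod_neq0.
Qed.

Let Pc_eval v l : Q.@[v] != 0 -> (Pc l).@[v] / Q.@[v] = \sum_j W l j * (Xx j).@[v].
Proof.
move=> Q_v; rewrite mevalM mulrC mulKf // raddf_sum /=.
by apply: eq_bigr => j _; rewrite mevalZ.
Qed.

(* Every positive steady state z of (kappa, c) is the image of a point
   (u, z) under the parametrization: u holds the coordinates of the
   rate vector kappa o z^B, which lies in ker N, in the basis Kb. *)
Let steady_state_lift kappa c z : Pkc B N W kappa c z ->
  exists v, [/\ Q.@[v] != 0, forall j, (Xx j).@[v] = z j 0 &
              forall t, (P t).@[v] / Q.@[v] = kc_point kappa c t].
Proof.
move=> [z_pos [z_ss z_W]]; set h := hadamard kappa (monvec B z).
have h_ker : (h^T <= Kb)%MS.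
  by rewrite /Kb eq_row_base; apply/sub_kermxP; rewrite -trmx_mul z_ss trmx0.
pose u := h^T *m pinvmx Kb.
pose v i := row_mx u z^T 0 i.
have Xu_v l : (Xu l).@[v] = u 0 l by rewrite mevalXU /v row_mxEl.
have Xx_v j : (Xx j).@[v] = z j 0 by rewrite mevalXU /v row_mxEr mxE.
have Xx_neq0 j : (Xx j).@[v] != 0 by rewrite Xx_v gt_eqF ?z_pos.
have Q_v := Q_eval_neq0 Xx_neq0.
exists v; split=> // t; rewrite /P /kc_point -[t]splitK.
case: (split t) => [i|l]; rewrite unsplitK /=; last first.
  by rewrite col_mxEd Pc_eval // -z_W mxE; under eq_bigr do rewrite Xx_v.
rewrite col_mxEu Pk_eval //.
have -> : \sum_l Kb l i * (Xu l).@[v] = h i 0.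
  have := congr1 (fun M : 'M_(1, r) => M 0 i) (mulmxKpV h_ker); rewrite !mxE => <-.
  by apply: eq_bigr => l _; rewrite Xu_v mulrC.
under eq_bigr do rewrite Xx_v.
rewrite /h /hadamard /monvec !mxE mulfK // prodf_seq_neq0.
by apply/allP => j _; rewrite expf_neq0 ?gt_eqF ?z_pos.
Qed.

(* Generic finiteness of one coordinate: when q + n <= r + d, the k = r + d
   functions P t / Q and the coordinate x_j0 = (Q x_j0) / Q are algebraically
   dependent; the resulting relation leaves finitely many values of x_j0
   outside the zero set of a nonzero polynomial in (kappa, c). *)
Let generic_coordinate_finite (dim : (q + n <= r + d)%N) (j0 : 'I_n) :
  exists Lp : {mpoly R[r + d]}, Lp != 0 /\
   forall kappa c, Lp.@[kc_point kappa c] != 0 ->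
   exists sl : seq R, forall z, Pkc B N W kappa c z -> z j0 0 \in sl.
Proof.
have [D [g [g_nz rel]]] := rational_functions_dependent P (Q * Xx j0) Q dim.
have [Lp [Lp_neq0 roots]] := relation_roots_finite g_nz.
exists Lp; split => // kappa c Lp_kc.
have [sl in_sl] := roots _ Lp_kc.
exists sl => z z_ss; apply: in_sl.
have [v [Q_v Xx_v P_v]] := steady_state_lift z_ss.
rewrite -[RHS](rel v Q_v); apply: eq_bigr => x _.
rewrite mevalM [_ * (Xx j0).@[v]]mulrC mulfK // Xx_v.
by congr (_ * (_ * _)); apply: eq_bigr => i _; rewrite P_v.
Qed.

(* Generic finiteness of the positive steady states, when
   n <= d + rank N (which holds for d = n - rank Gamma = n - rank N). *)
Lemma steady_states_generically_finite (dim : (n <= d + \rank NR)%N) :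
  exists Lp : {mpoly R[r + d]}, Lp != 0 /\
   forall kappa c, Lp.@[kc_point kappa c] != 0 -> finite_pred (Pkc B N W kappa c).
Proof.
have dim' : (q + n <= r + d)%N.
  by rewrite mxrank_ker mxrank_tr; have := rank_leq_col NR; lia.
have /fin_all_exists[Lf Lf_spec] := generic_coordinate_finite dim'.
exists (\prod_j Lf j); split.
  by rewrite prodf_seq_neq0; apply/allP => j _; case: (Lf_spec j).
move=> kappa c; rewrite rmorph_prod prodf_seq_neq0 => /allP Lf_kc.
have /fin_all_exists[Ls Ls_spec] j :
    exists sl : seq R, forall z, Pkc B N W kappa c z -> z j 0 \in sl.
  by apply: (Lf_spec j).2; apply: Lf_kc; rewrite mem_index_enum.
have [sv sv_spec] := finite_coordinate_values Ls.
by exists sv => z z_ss; apply: sv_spec => j; apply: Ls_spec.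
Qed.

End SteadyStateParametrization.

Unset Implicit Arguments.

Theorem mainTheorem19 (R : realType) (n r s d : nat)
  (A B : 'M[nat]_(n, r)) (N : 'M[int]_(s, r)) (W : 'M[R]_(d, n)) :
  s = \rank (stoich R A B) ->
  d = (n - s)%N ->
  \rank (map_mx (fun z : int => z%:~R) N : 'M[R]_(s, r)) = s ->
  ((map_mx (fun z : int => z%:~R) N : 'M[R]_(s, r)) == stoich R A B)%MS ->
  row_free W ->
  (W == kermx (stoich R A B))%MS ->
  (forall (kappa : 'cV[R]_r) (c : 'cV[R]_d), positive_vec kappa ->
     (exists x, Pkc B N W kappa c x) -> ~ finite_pred (Pkc B N W kappa c)) ->
  exists ps : seq {mpoly R[r + d]},
    (exists (kappa : 'cV[R]_r) (c : 'cV[R]_d), zariski_open_at ps kappa c) /\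
    (forall (kappa : 'cV[R]_r) (c : 'cV[R]_d), zariski_open_at ps kappa c ->
       forall x, ~ Pkc B N W kappa c x).
Proof.
move=> def_s def_d rank_N _ _ _ nonempty_infinite.
have s_le_n : (s <= n)%N by rewrite def_s rank_leq_row.
have dim : (n <= d + \rank (map_mx (fun z : int => z%:~R) N : 'M[R]_(s, r)))%N.
  by rewrite rank_N def_d; lia.
have [L [L_neq0 L_finite]] := steady_states_generically_finite B W dim.
exists [:: L]; split.
  have [v v_pos L_v] := mpoly_nonzero_at_positive L_neq0.
  exists (\col_i v (lshift d i)), (\col_l v (rshift r l)); split.
    by move=> i; rewrite mxE.
  by rewrite /= orbF (meval_eq _ (kc_point_col_split v)).
move=> kappa c [kappa_pos]; rewrite /= orbF => L_kc x x_ss.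
by apply: (nonempty_infinite kappa c kappa_pos); [exists x | exact: L_finite].
Qed.
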